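(* (i) If there exists a function $m:\Gamma\to(0,\infty)$ such that $\beta_x m(x)\ge \lambda_x m(x')+\sum_{y\in N_x}\lambda_y m(y)$ for every $x\in\Gamma$, then $(Jv,v)\ge0$ for all $v\in\mathcal F(\Gamma)$. (ii) Conversely, if $(Jv,v)\ge 0$ for all $v\in\mathcal F(\Gamma)$, then there exists a function $m:\Gamma\to(0,\infty)$ such that $\beta_x m(x)= \lambda_x m(x')+\sum_{y\in N_x}\lambda_y m(y)$ for every $x\in\Gamma$.
   Context: Let $\Gamma$ be an infinite connected tree whose vertices are arranged in levels $\ell(x)\in\{0,1,2,\dots\}$: every vertex $x$ is adjacent to exactly one vertex $x'$ with $\ell(x')=\ell(x)+1$; for $\ell(x)\ge 1$ the set $N_x=\{y:\ y'=x\}$ of neighbours of $x$ on level $\ell(x)-1$ is finite and nonempty; $N_x=\emptyset$ if $\ell(x)=0$; there are no other edges. Fix $\lambda_x>0$, $\beta_x\in\mathbb R$. The Jacobi matrix $J$ acts on functions $v:\Gamma\to\mathbb C$ by $(Jv)(x)=\lambda_x v(x')+\beta_x v(x)+\sum_{y\in N_x}\lambda_y v(y)$. $\mathcal F(\Gamma)$ denotes the finitely supported functions on $\Gamma$, and $(u,v)=\sum_{x\in\Gamma}u(x)\overline{v(x)}$. *)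

From Stdlib Require Import Reals List.
Import ListNotations.
Open Scope R_scope.

Definition C : Type := (R * R)%type.
Definition Cre (z : C) : R := fst z.
Definition Cim (z : C) : R := snd z.
Definition C0 : C := (0, 0).
Definition Cadd (z w : C) : C := (fst z + fst w, snd z + snd w).
Definition Cmul (z w : C) : C :=
  (fst z * fst w - snd z * snd w, fst z * snd w + snd z * fst w).
Definition Cconj (z : C) : C := (fst z, - snd z).
Definition RtoC (r : R) : C := (r, 0).

Definition lsumR {V : Type} (l : list V) (g : V -> R) : R :=
  fold_right (fun y acc => g y + acc) 0 l.
Definition lsumC {V : Type} (l : list V) (g : V -> C) : C :=
  fold_right (fun y acc => Cadd (g y) acc) C0 l.

(* The Jacobi matrix: par x = x', ch x = an enumeration (without repetition) of N_x.
   (Jv)(x) = lam x v(x') + beta x v(x) + sum_{y in N_x} lam y v(y). *)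
Definition Jac {V : Type} (par : V -> V) (ch : V -> list V) (lam beta : V -> R)
  (v : V -> C) (x : V) : C :=
  Cadd (Cadd (Cmul (RtoC (lam x)) (v (par x))) (Cmul (RtoC (beta x)) (v x)))
       (lsumC (ch x) (fun y => Cmul (RtoC (lam y)) (v y))).

Definition inner {V : Type} (S : list V) (u w : V -> C) : C :=
  lsumC S (fun x => Cmul (u x) (Cconj (w x))).

(* (Jv, v) >= 0 for all finitely supported v: for any v : V -> C and any duplicate-free
   list S containing the support of v, the (finite) sum over Gamma equals the sum over S,
   and it is a nonnegative real number. *)
Definition J_nonneg {V : Type} (par : V -> V) (ch : V -> list V) (lam beta : V -> R) : Prop :=
  forall (v : V -> C) (S : list V),
    NoDup S -> (forall x, ~ In x S -> v x = C0) ->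
    Cim (inner S (Jac par ch lam beta v) v) = 0 /\
    0 <= Cre (inner S (Jac par ch lam beta v) v).

Definition level_tree {V : Type} (par : V -> V) (lev : V -> nat) (ch : V -> list V) : Prop :=
  inhabited V /\
  (forall x, lev (par x) = S (lev x)) /\
  (forall x, NoDup (ch x)) /\
  (forall x y, In y (ch x) <-> par y = x) /\
  (forall x, (1 <= lev x)%nat -> ch x <> []) /\
  (forall x, lev x = 0%nat -> ch x = []) /\
  (forall x y, exists n k : nat, Nat.iter n par x = Nat.iter k par y).

(* (i) Ground state transform: writing a(x)^2 beta_x >= (a(x)^2/m(x)) (lam_x m(x') + sum_{N_x} lam_y m(y)),
   every edge {y, y'} contributes lam_y (m(y') a(y) + m(y) a(y'))^2 / (m(y) m(y')) >= 0 to (Ja, a);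
   the imaginary part of (Jv, v) vanishes because the real form is symmetric.
   (ii) Eliminate J from the leaves upwards: the pivots d(x) = beta_x - sum_{y in N_x} lam_y^2 / d(y)
   are positive. Indeed, testing J on the function which is 1 at x, t at x', and is continued below x
   so that J kills it strictly below x, gives 0 <= d(x) + 2 lam_x t + beta_{x'} t^2 for all t, hence
   d(x) > 0. Connectedness then yields a positive m with m(y) = (lam_y / d(y)) m(y'), and this m
   solves the equation. *)

From Stdlib Require Import Reals List Lra Lia Psatz Permutation ClassicalEpsilon.
Import ListNotations.
Open Scope R_scope.

Section FiniteSums.
Context {V : Type}.
Implicit Types (l : list V) (f g : V -> R).

Lemma lsumR_nil f : lsumR [] f = 0.
Proof. reflexivity. Qed.

Lemma lsumR_cons a l f : lsumR (a :: l) f = f a + lsumR l f.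
Proof. reflexivity. Qed.

Lemma lsumR_ext l f g : (forall y, In y l -> f y = g y) -> lsumR l f = lsumR l g.
Proof.
  induction l as [|a l IH]; intros H; rewrite ?lsumR_nil, ?lsumR_cons; [reflexivity|].
  rewrite H, IH; auto with datatypes.
Qed.

Lemma lsumR_plus l f g : lsumR l (fun y => f y + g y) = lsumR l f + lsumR l g.
Proof. induction l as [|a l IH]; rewrite ?lsumR_nil, ?lsumR_cons, ?IH; lra. Qed.

Lemma lsumR_scal l c f : lsumR l (fun y => c * f y) = c * lsumR l f.
Proof. induction l as [|a l IH]; rewrite ?lsumR_nil, ?lsumR_cons, ?IH; lra. Qed.

Lemma lsumR_le l f g : (forall y, In y l -> f y <= g y) -> lsumR l f <= lsumR l g.
Proof.
  induction l as [|a l IH]; intros H; rewrite ?lsumR_nil, ?lsumR_cons; [lra|].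
  apply Rplus_le_compat; auto with datatypes.
Qed.

Lemma lsumR_app l1 l2 f : lsumR (l1 ++ l2) f = lsumR l1 f + lsumR l2 f.
Proof. induction l1 as [|a l1 IH]; cbn [app]; rewrite ?lsumR_nil, ?lsumR_cons, ?IH; lra. Qed.

Lemma lsumR_zero l : lsumR l (fun _ => 0) = 0.
Proof. induction l as [|a l IH]; rewrite ?lsumR_nil, ?lsumR_cons, ?IH; lra. Qed.

Lemma lsumR_nonneg l f : (forall y, In y l -> 0 <= f y) -> 0 <= lsumR l f.
Proof.
  induction l as [|a l IH]; intros H; rewrite ?lsumR_nil, ?lsumR_cons; [lra|].
  apply Rplus_le_le_0_compat; auto with datatypes.
Qed.

Lemma lsumR_flat_map {W : Type} (h : W -> list V) (L : list W) f :
  lsumR (flat_map h L) f = lsumR L (fun z => lsumR (h z) f).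
Proof.
  induction L as [|z L IH]; [reflexivity|].
  change (lsumR (h z ++ flat_map h L) f = lsumR (h z) f + lsumR L (fun z => lsumR (h z) f)).
  rewrite lsumR_app, IH. reflexivity.
Qed.

Lemma lsumR_perm l1 l2 f : Permutation l1 l2 -> lsumR l1 f = lsumR l2 f.
Proof.
  induction 1; rewrite ?lsumR_cons; lra.
Qed.

Definition nonzero f (y : V) : bool := if Req_dec_T (f y) 0 then false else true.

Lemma lsumR_filter_nonzero l f : lsumR l f = lsumR (filter (nonzero f) l) f.
Proof.
  induction l as [|a l IH]; [reflexivity|].
  cbn [filter]. unfold nonzero at 1.
  destruct (Req_dec_T (f a) 0) as [E|E]; rewrite lsumR_cons, IH, ?lsumR_cons; lra.
Qed.

Lemma lsumR_same_support l1 l2 f : NoDup l1 -> NoDup l2 ->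
  (forall y, f y <> 0 -> (In y l1 <-> In y l2)) -> lsumR l1 f = lsumR l2 f.
Proof.
  intros N1 N2 H. rewrite (lsumR_filter_nonzero l1), (lsumR_filter_nonzero l2).
  apply lsumR_perm, NoDup_Permutation; try apply NoDup_filter; auto.
  intros y. rewrite !filter_In. unfold nonzero.
  destruct (Req_dec_T (f y) 0) as [E|E]; [intuition discriminate|].
  specialize (H y E). tauto.
Qed.

Lemma lsumR_le_incl l1 l2 f : NoDup l1 -> NoDup l2 -> (forall y, 0 <= f y) ->
  (forall y, f y <> 0 -> In y l1 -> In y l2) -> lsumR l1 f <= lsumR l2 f.
Proof.
  intros N1 N2 Hf H.
  set (f1 := fun y => if excluded_middle_informative (In y l1) then f y else 0).
  assert (Hf1 : forall y, f1 y <= f y).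
  { intros y; unfold f1; destruct excluded_middle_informative; [lra|apply Hf]. }
  rewrite (lsumR_ext l1 f f1).
  2:{ intros y Hy; unfold f1; destruct excluded_middle_informative; tauto. }
  rewrite (lsumR_same_support l1 l2 f1); auto.
  - apply lsumR_le; auto.
  - intros y; unfold f1; destruct excluded_middle_informative as [I|I]; [|tauto].
    intros Hy; split; auto.
Qed.

End FiniteSums.

Lemma NoDup_flat_map_disjoint {W V : Type} (h : W -> list V) (L : list W) :
  NoDup L -> (forall z, NoDup (h z)) ->
  (forall z z' y, In y (h z) -> In y (h z') -> z = z') -> NoDup (flat_map h L).
Proof.
  intros NL Nh Hd. induction NL as [|z L Hz NL IH]; cbn [flat_map]; [constructor|].
  apply NoDup_app; auto. intros y Hy Hy'. apply in_flat_map in Hy' as [z' [Hz' Hy']].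
  rewrite (Hd z z' y Hy Hy') in Hz. contradiction.
Qed.

Section JacobiForm.
Context {V : Type} (par : V -> V) (ch : V -> list V) (lam beta : V -> R).

Definition JacR (g : V -> R) (z : V) : R :=
  lam z * g (par z) + beta z * g z + lsumR (ch z) (fun y => lam y * g y).

Definition form (S : list V) (a b : V -> R) : R := lsumR S (fun z => JacR a z * b z).

Lemma Cre_lsumC (l : list V) h : Cre (lsumC l h) = lsumR l (fun y => Cre (h y)).
Proof. induction l as [|a l IH]; [reflexivity|]. rewrite lsumR_cons, <- IH. reflexivity. Qed.

Lemma Cim_lsumC (l : list V) h : Cim (lsumC l h) = lsumR l (fun y => Cim (h y)).
Proof. induction l as [|a l IH]; [reflexivity|]. rewrite lsumR_cons, <- IH. reflexivity. Qed.

Lemma Cre_Jac v x : Cre (Jac par ch lam beta v x) = JacR (fun z => Cre (v z)) x.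
Proof.
  unfold Jac, JacR. change (Cre (Cadd ?a ?b)) with (Cre a + Cre b). rewrite Cre_lsumC.
  rewrite (lsumR_ext _ _ (fun y => lam y * Cre (v y))) by (intros; unfold Cre, Cim, Cmul, RtoC; cbn [fst snd]; ring).
  unfold Cre, Cim, Cadd, Cmul, RtoC; cbn [fst snd]; ring.
Qed.

Lemma Cim_Jac v x : Cim (Jac par ch lam beta v x) = JacR (fun z => Cim (v z)) x.
Proof.
  unfold Jac, JacR. change (Cim (Cadd ?a ?b)) with (Cim a + Cim b). rewrite Cim_lsumC.
  rewrite (lsumR_ext _ _ (fun y => lam y * Cim (v y))) by (intros; unfold Cre, Cim, Cmul, RtoC; cbn [fst snd]; ring).
  unfold Cre, Cim, Cadd, Cmul, RtoC; cbn [fst snd]; ring.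
Qed.

Lemma Cre_inner S v : Cre (inner S (Jac par ch lam beta v) v) =
  form S (fun z => Cre (v z)) (fun z => Cre (v z)) + form S (fun z => Cim (v z)) (fun z => Cim (v z)).
Proof.
  unfold inner, form. rewrite Cre_lsumC, <- lsumR_plus. apply lsumR_ext; intros z _.
  rewrite <- Cre_Jac, <- Cim_Jac. unfold Cre, Cim, Cmul, Cconj; cbn [fst snd]; ring.
Qed.

Lemma Cim_inner S v : Cim (inner S (Jac par ch lam beta v) v) =
  form S (fun z => Cim (v z)) (fun z => Cre (v z)) - form S (fun z => Cre (v z)) (fun z => Cim (v z)).
Proof.
  unfold inner, form. rewrite Cim_lsumC.
  rewrite (lsumR_ext _ _ (fun z => JacR (fun z => Cim (v z)) z * Cre (v z)
                          + -1 * (JacR (fun z => Cre (v z)) z * Cim (v z)))).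
  - rewrite lsumR_plus, lsumR_scal. ring.
  - intros z _. rewrite <- Cre_Jac, <- Cim_Jac. unfold Cre, Cim, Cmul, Cconj; cbn [fst snd]; ring.
Qed.

Lemma form_nonneg_of_J_nonneg S a : J_nonneg par ch lam beta -> NoDup S ->
  (forall z, ~ In z S -> a z = 0) -> 0 <= form S a a.
Proof.
  intros HJ NS Ha.
  destruct (HJ (fun z => RtoC (a z)) S NS) as [_ Hre].
  { intros z Hz. unfold RtoC, C0. now rewrite Ha. }
  rewrite Cre_inner in Hre.
  assert (form S (fun z => Cim (RtoC (a z))) (fun z => Cim (RtoC (a z))) = 0) as E.
  { unfold form. rewrite <- (lsumR_zero S). apply lsumR_ext; intros z _.
    unfold Cim, RtoC; cbn [snd]. ring. }
  rewrite E, Rplus_0_r in Hre. exact Hre.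
Qed.

Hypothesis Hch : forall x y, In y (ch x) <-> par y = x.
Hypothesis HND : forall x, NoDup (ch x).

Lemma lsumR_children (S : list V) (h : V -> V -> R) :
  lsumR S (fun z => lsumR (ch z) (h z)) = lsumR (flat_map ch S) (fun y => h (par y) y).
Proof.
  rewrite lsumR_flat_map. apply lsumR_ext; intros z _.
  apply lsumR_ext; intros y Hy. apply Hch in Hy. now subst z.
Qed.

Lemma NoDup_flat_map_children (S : list V) : NoDup S -> NoDup (flat_map ch S).
Proof.
  intros NS. apply NoDup_flat_map_disjoint; auto.
  intros z z' y Hz Hz'. apply Hch in Hz, Hz'. congruence.
Qed.

Lemma in_flat_map_children (S : list V) y : In y (flat_map ch S) <-> In (par y) S.
Proof.
  rewrite in_flat_map. split.
  - intros [z [Hz Hy]]. apply Hch in Hy. now subst z.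
  - intros Hy. exists (par y). split; auto. now apply Hch.
Qed.

Lemma lsumR_children_reindex (S : list V) (h : V -> V -> R) : NoDup S ->
  (forall y, h (par y) y <> 0 -> In (par y) S /\ In y S) ->
  lsumR S (fun z => lsumR (ch z) (h z)) = lsumR S (fun y => h (par y) y).
Proof.
  intros NS Hh. rewrite lsumR_children.
  apply lsumR_same_support; auto using NoDup_flat_map_children.
  intros y Hy. rewrite in_flat_map_children. specialize (Hh y Hy). tauto.
Qed.

Lemma lsumR_children_reindex_le (S : list V) (h : V -> V -> R) : NoDup S ->
  (forall z y, 0 <= h z y) -> (forall y, h (par y) y <> 0 -> In (par y) S) ->
  lsumR S (fun y => h (par y) y) <= lsumR S (fun z => lsumR (ch z) (h z)).
Proof.
  intros NS Hpos Hh. rewrite lsumR_children.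
  apply lsumR_le_incl; auto using NoDup_flat_map_children.
  intros y Hy _. now apply in_flat_map_children, Hh.
Qed.

Lemma in_support_of_nonzero (S : list V) (g : V -> R) z :
  (forall z, ~ In z S -> g z = 0) -> g z <> 0 -> In z S.
Proof.
  intros Hg Hz. destruct (excluded_middle_informative (In z S)) as [I|I]; auto.
  now rewrite Hg in Hz.
Qed.

Section Supported.
Variable S : list V.
Hypothesis NS : NoDup S.

Lemma form_expand (a b : V -> R) :
  (forall z, ~ In z S -> a z = 0) -> (forall z, ~ In z S -> b z = 0) ->
  form S a b =
  lsumR S (fun z => lam z * a (par z) * b z) + lsumR S (fun z => beta z * a z * b z)
  + lsumR S (fun y => lam y * a y * b (par y)).
Proof.
  intros Ha Hb.
  rewrite <- (lsumR_children_reindex S (fun z y => lam y * a y * b z)); auto.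
  - rewrite <- !lsumR_plus. apply lsumR_ext; intros z _. unfold JacR.
    rewrite Rmult_plus_distr_r, (Rmult_comm (lsumR _ _)), <- lsumR_scal.
    rewrite (lsumR_ext (ch z) (fun y => b z * (lam y * a y)) (fun y => lam y * a y * b z))
      by (intros; ring).
    ring.
  - intros y Hy. split.
    + apply (in_support_of_nonzero S b); auto. intros E; apply Hy; rewrite E; ring.
    + apply (in_support_of_nonzero S a); auto. intros E; apply Hy; rewrite E; ring.
Qed.

Lemma form_sym (a b : V -> R) :
  (forall z, ~ In z S -> a z = 0) -> (forall z, ~ In z S -> b z = 0) ->
  form S a b = form S b a.
Proof.
  intros Ha Hb. rewrite (form_expand a b), (form_expand b a); auto.
  rewrite (lsumR_ext S (fun z => beta z * b z * a z) (fun z => beta z * a z * b z)),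
    (lsumR_ext S (fun z => lam z * b (par z) * a z) (fun y => lam y * a y * b (par y))),
    (lsumR_ext S (fun y => lam y * b y * a (par y)) (fun z => lam z * a (par z) * b z));
    intros; ring.
Qed.

Lemma ground_state_square (l p q x y : R) : 0 < l -> 0 < p -> 0 < q ->
  0 <= 2 * (l * x * y) + x * x / p * (l * q) + y * y / q * (l * p).
Proof.
  intros Hl Hp Hq.
  replace (2 * (l * x * y) + x * x / p * (l * q) + y * y / q * (l * p))
    with (l * ((q * x + p * y) * (q * x + p * y)) / (p * q)) by (field; lra).
  unfold Rdiv; apply Rmult_le_pos.
  - apply Rmult_le_pos; [lra|apply Rle_0_sqr].
  - apply Rlt_le, Rinv_0_lt_compat; nra.
Qed.

Hypothesis Hlam : forall x, 0 < lam x.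
Variable m : V -> R.
Hypothesis Hm : forall x, 0 < m x.
Hypothesis Hsup : forall x, beta x * m x >= lam x * m (par x) + lsumR (ch x) (fun y => lam y * m y).

Lemma form_self_nonneg (a : V -> R) : (forall z, ~ In z S -> a z = 0) -> 0 <= form S a a.
Proof.
  intros Ha. set (q z := a z * a z / m z).
  assert (q_nonneg : forall z, 0 <= q z).
  { intros z; unfold q, Rdiv; apply Rmult_le_pos; [apply Rle_0_sqr|].
    apply Rlt_le, Rinv_0_lt_compat, Hm. }
  assert (diag : lsumR S (fun z => q z * (lam z * m (par z)))
                 + lsumR S (fun z => lsumR (ch z) (fun y => q z * (lam y * m y)))
                 <= lsumR S (fun z => beta z * a z * a z)).
  { rewrite <- lsumR_plus. apply lsumR_le; intros z _.
    rewrite lsumR_scal, <- Rmult_plus_distr_l.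
    replace (beta z * a z * a z) with (q z * (beta z * m z)) by (unfold q; field; apply Rgt_not_eq, Hm).
    apply Rmult_le_compat_l; [apply q_nonneg|]. apply Rge_le, Hsup. }
  assert (reindex : lsumR S (fun y => q (par y) * (lam y * m y))
                    <= lsumR S (fun z => lsumR (ch z) (fun y => q z * (lam y * m y)))).
  { apply (lsumR_children_reindex_le S (fun z y => q z * (lam y * m y))); auto.
    - intros z y. apply Rmult_le_pos; [apply q_nonneg|]. apply Rmult_le_pos; apply Rlt_le; auto.
    - intros y Hy. apply (in_support_of_nonzero S a); auto.
      intros E; apply Hy; unfold q; rewrite E; field; apply Rgt_not_eq, Hm. }
  assert (edges : 0 <= lsumR S (fun y => 2 * (lam y * a y * a (par y))
                     + q y * (lam y * m (par y)) + q (par y) * (lam y * m y))).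
  { apply lsumR_nonneg; intros y _. apply ground_state_square; auto. }
  rewrite !lsumR_plus, lsumR_scal in edges.
  rewrite form_expand; auto.
  rewrite (lsumR_ext S (fun z => lam z * a (par z) * a z) (fun y => lam y * a y * a (par y)))
    by (intros; ring).
  lra.
Qed.

End Supported.

Lemma J_nonneg_of_superharmonic (m : V -> R) : (forall x, 0 < lam x) -> (forall x, 0 < m x) ->
  (forall x, beta x * m x >= lam x * m (par x) + lsumR (ch x) (fun y => lam y * m y)) ->
  J_nonneg par ch lam beta.
Proof.
  intros Hlam Hm Hsup v S NS Hv.
  assert (Hre : forall z, ~ In z S -> Cre (v z) = 0) by (intros z Hz; now rewrite Hv).
  assert (Him : forall z, ~ In z S -> Cim (v z) = 0) by (intros z Hz; now rewrite Hv).
  rewrite Cim_inner, Cre_inner, (form_sym S NS (fun z => Cim (v z))); auto.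
  split; [ring|].
  apply Rplus_le_le_0_compat; apply (form_self_nonneg S NS Hlam m Hm Hsup); auto.
Qed.

End JacobiForm.

Lemma quadratic_nonneg_const_pos (a b c : R) : b <> 0 ->
  (forall t, 0 <= c + 2 * b * t + a * (t * t)) -> 0 < c.
Proof.
  intros Hb H. destruct (Rlt_or_le 0 c) as [Hc|Hc]; auto. exfalso.
  assert (Ha1 : 0 < Rabs a + 1) by (pose proof (Rabs_pos a); lra).
  set (s := / (Rabs a + 1)).
  assert (Hs : 0 < s) by (apply Rinv_0_lt_compat; exact Ha1).
  assert (Has : a * s < 1).
  { apply (Rmult_lt_reg_r (Rabs a + 1)); [exact Ha1|]. unfold s.
    rewrite Rmult_assoc, Rinv_l, Rmult_1_r, Rmult_1_l by lra. pose proof (Rle_abs a); lra. }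
  assert (Hbbs : 0 < b * b * s) by (apply Rmult_lt_0_compat; [nra|exact Hs]).
  specialize (H (- b * s)).
  (* the value at t = -b s is c + b^2 s (a s - 2) < 0 *)
  nra.
Qed.

Section Levels.
Context {V : Type} (par : V -> V) (lev : V -> nat).
Hypothesis Hlev : forall x, lev (par x) = S (lev x).

Lemma lev_iter n z : lev (Nat.iter n par z) = (n + lev z)%nat.
Proof. induction n as [|n IH]; [reflexivity|]. now rewrite Nat.iter_succ, Hlev, IH. Qed.

Lemma par_neq x : par x <> x.
Proof. intros E. pose proof (Hlev x) as L. rewrite E in L. lia. Qed.

Fixpoint path_prod (f : V -> R) (n : nat) (z : V) : R :=
  match n with O => 1 | S n' => f z * path_prod f n' (par z) end.

Lemma path_prod_add f n k x :
  path_prod f (n + k) x = path_prod f n x * path_prod f k (Nat.iter n par x).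
Proof.
  revert x; induction n as [|n IH]; intros x.
  - cbn [path_prod Nat.add Nat.iter nat_rect]. ring.
  - rewrite Nat.iter_succ_r. cbn [path_prod Nat.add]. rewrite IH. ring.
Qed.

Lemma path_prod_pos f : (forall x, 0 < f x) -> forall n x, 0 < path_prod f n x.
Proof. intros Hf n; induction n; intros x; cbn; [lra|]. apply Rmult_lt_0_compat; auto. Qed.

Lemma path_prod_ratio_indep (r : V -> R) (o x : V) n k n' k' :
  (forall x, 0 < r x) ->
  Nat.iter n par x = Nat.iter k par o -> Nat.iter n' par x = Nat.iter k' par o ->
  path_prod r n x / path_prod r k o = path_prod r n' x / path_prod r k' o.
Proof.
  intros Hr.
  (* the two common ancestors lie on the same ray, [n' - n = k' - k] steps apart *)
  enough (W : forall n k n' k', (n <= n')%nat -> Nat.iter n par x = Nat.iter k par o ->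
    Nat.iter n' par x = Nat.iter k' par o ->
    path_prod r n x / path_prod r k o = path_prod r n' x / path_prod r k' o).
  { intros H1 H2. destruct (Nat.le_ge_cases n n'); [|symmetry]; apply W; auto. }
  clear n k n' k'. intros n k n' k' Hnn' H1 H2.
  pose proof (f_equal lev H1) as L1. pose proof (f_equal lev H2) as L2.
  rewrite !lev_iter in L1, L2.
  replace n' with (n + (n' - n))%nat by lia. replace k' with (k + (n' - n))%nat by lia.
  rewrite !path_prod_add, H1.
  pose proof (path_prod_pos r Hr n x). pose proof (path_prod_pos r Hr k o).
  pose proof (path_prod_pos r Hr (n' - n) (Nat.iter k par o)).
  field. split; lra.
Qed.

Lemma multiplicative_potential (r : V -> R) (o : V) : (forall x, 0 < r x) ->
  (forall x y, exists n k, Nat.iter n par x = Nat.iter k par y) ->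
  exists m : V -> R, (forall x, 0 < m x) /\ (forall x, m x = r x * m (par x)).
Proof.
  intros Hr Hconn.
  assert (meet : forall x, {p : nat * nat | Nat.iter (fst p) par x = Nat.iter (snd p) par o}).
  { intros x. apply constructive_indefinite_description.
    destruct (Hconn x o) as [n [k H]]. now exists (n, k). }
  (* m x := r-product from x up to a common ancestor with o, divided by the one from o *)
  exists (fun x => path_prod r (fst (proj1_sig (meet x))) x / path_prod r (snd (proj1_sig (meet x))) o).
  split.
  - intros x. apply Rdiv_lt_0_compat; apply path_prod_pos; auto.
  - intros x. destruct (meet x) as [[n k] Hx], (meet (par x)) as [[n' k'] Hpx]; cbn in *.
    rewrite (path_prod_ratio_indep r o x n k (S n') k'); auto.
    + cbn. unfold Rdiv. ring.
    + now rewrite Nat.iter_succ_r.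
Qed.

Definition descendant (z x : V) : Prop := exists n, Nat.iter n par z = x.

Lemma descendant_refl x : descendant x x.
Proof. now exists 0%nat. Qed.

Lemma descendant_lev_le z x : descendant z x -> (lev z <= lev x)%nat.
Proof. intros [n <-]. rewrite lev_iter. lia. Qed.

Lemma descendant_lev_eq z x : descendant z x -> lev z = lev x -> z = x.
Proof.
  intros [n Hn] E. pose proof (lev_iter n z) as L. rewrite Hn in L.
  replace n with 0%nat in Hn by lia. exact Hn.
Qed.

Lemma descendant_of_par y x : descendant (par y) x -> descendant y x.
Proof. intros [n Hn]. exists (S n). now rewrite Nat.iter_succ_r. Qed.

Lemma par_descendant z x : descendant z x -> z <> x -> descendant (par z) x.
Proof.
  intros [[|n] Hn] Hz; [contradiction|]. exists n. now rewrite <- Nat.iter_succ_r.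
Qed.

Lemma par_not_descendant x : ~ descendant (par x) x.
Proof. intros H. apply descendant_lev_le in H. rewrite Hlev in H. lia. Qed.

Variable ch : V -> list V.
Hypothesis Hch : forall x y, In y (ch x) <-> par y = x.

Fixpoint descendants (k : nat) (x : V) : list V :=
  match k with O => [x] | S k' => x :: flat_map (descendants k') (ch x) end.

Lemma in_descendants z x : descendant z x -> In z (descendants (lev x) x).
Proof.
  intros [n Hn]. revert x Hn; induction n as [|n IH]; intros x Hn.
  - cbn in Hn; subst. destruct (lev x); cbn; auto.
  - rewrite Nat.iter_succ in Hn. rewrite <- Hn, Hlev. cbn. right.
    apply in_flat_map. exists (Nat.iter n par z). split; [now apply Hch|]. now apply IH.
Qed.

End Levels.

Section Pivots.
Context {V : Type} (par : V -> V) (lev : V -> nat) (ch : V -> list V) (lam beta : V -> R).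
Hypothesis Hlev : forall x, lev (par x) = S (lev x).
Hypothesis Hch : forall x y, In y (ch x) <-> par y = x.
Hypothesis HND : forall x, NoDup (ch x).
Hypothesis Hleaf : forall x, lev x = 0%nat -> ch x = [].

(* The pivots of Gaussian elimination of [J] from the leaves upwards:
   d(x) = beta x - sum_{y in N_x} lam y ^ 2 / d(y), by recursion on the level
   (junk after a zero pivot; [pivot_pos] excludes those under [J_nonneg]). *)
Fixpoint pivot_at (k : nat) (x : V) : R :=
  match k with
  | O => beta x
  | S k' => beta x - lsumR (ch x) (fun y => lam y * (lam y / pivot_at k' y))
  end.

Definition pivot (x : V) : R := pivot_at (lev x) x.

Definition ratio (x : V) : R := lam x / pivot x.

Lemma pivot_eq x : pivot x = beta x - lsumR (ch x) (fun y => lam y * ratio y).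
Proof.
  unfold pivot. destruct (lev x) as [|k] eqn:E.
  - cbn [pivot_at]. rewrite (Hleaf x E), lsumR_nil. ring.
  - cbn [pivot_at]. f_equal. apply lsumR_ext; intros y Hy. apply Hch in Hy.
    unfold ratio, pivot. replace (lev y) with k; [reflexivity|].
    subst x. rewrite Hlev in E. now injection E.
Qed.

Lemma lsumR_children_proportional (g : V -> R) (c : R) z :
  (forall y, In y (ch z) -> g y = c * ratio y * g z) ->
  lsumR (ch z) (fun y => lam y * g y) = c * (beta z - pivot z) * g z.
Proof.
  intros Hg. rewrite (lsumR_ext _ _ (fun y => c * g z * (lam y * ratio y))).
  - rewrite lsumR_scal, pivot_eq. ring.
  - intros y Hy. rewrite Hg by exact Hy. ring.
Qed.

Lemma harmonic_of_ratio_potential (m : V -> R) : (forall x, pivot x <> 0) ->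
  (forall x, m x = ratio x * m (par x)) ->
  forall x, beta x * m x = lam x * m (par x) + lsumR (ch x) (fun y => lam y * m y).
Proof.
  intros Hd Hm x.
  rewrite (lsumR_children_proportional m 1 x).
  - rewrite (Hm x). unfold ratio. field. apply Hd.
  - intros y Hy. apply Hch in Hy. subst x. rewrite Hm. ring.
Qed.

Section TestFunction.
Variables (x : V) (t : R).

(* [1] at [x], [t] at [par x], zero off the subtree of [x] and [par x], and continued below [x]
   so that [J] kills it there ([JacR_test_fn_below]). *)
Definition test_fn (z : V) : R :=
  if excluded_middle_informative (descendant par z x)
  then path_prod par (fun y => - ratio y) (lev x - lev z) z
  else if excluded_middle_informative (z = par x) then t else 0.

Lemma test_fn_root : test_fn x = 1.
Proof.
  unfold test_fn. destruct excluded_middle_informative as [_|D].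
  - now rewrite Nat.sub_diag.
  - now destruct (D (descendant_refl par x)).
Qed.

Lemma test_fn_par : test_fn (par x) = t.
Proof.
  unfold test_fn. destruct excluded_middle_informative as [D|_].
  - now destruct (par_not_descendant par lev Hlev x D).
  - now destruct excluded_middle_informative.
Qed.

Lemma test_fn_out z : ~ descendant par z x -> z <> par x -> test_fn z = 0.
Proof.
  intros D E. unfold test_fn.
  do 2 (destruct excluded_middle_informative; try contradiction). reflexivity.
Qed.

Lemma test_fn_child y : descendant par (par y) x -> test_fn y = - ratio y * test_fn (par y).
Proof.
  intros D. pose proof (descendant_lev_le par lev Hlev _ _ D) as L. rewrite Hlev in L.
  unfold test_fn. destruct excluded_middle_informative as [_|D'];
    [|now destruct (D' (descendant_of_par par _ _ D))].
  destruct excluded_middle_informative as [_|D'']; [|contradiction].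
  replace (lev x - lev y)%nat with (S (lev x - lev (par y))) by (rewrite Hlev; lia).
  reflexivity.
Qed.

Lemma JacR_test_fn_below z : descendant par z x -> z <> x -> pivot z <> 0 ->
  JacR par ch lam beta test_fn z = 0.
Proof.
  intros D Hz Hd. pose proof (par_descendant par z x D Hz) as Dp.
  unfold JacR. rewrite (lsumR_children_proportional test_fn (-1) z).
  - rewrite (test_fn_child z Dp). unfold ratio. field. exact Hd.
  - intros y Hy. apply Hch in Hy. subst z. rewrite test_fn_child; [ring|exact D].
Qed.

Lemma JacR_test_fn_root : JacR par ch lam beta test_fn x = pivot x + lam x * t.
Proof.
  unfold JacR. rewrite (lsumR_children_proportional test_fn (-1) x).
  - rewrite test_fn_root, test_fn_par. ring.
  - intros y Hy. apply Hch in Hy. rewrite test_fn_child, Hy, test_fn_root; [ring|].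
    rewrite Hy. apply descendant_refl.
Qed.

Lemma JacR_test_fn_par : JacR par ch lam beta test_fn (par x) = beta (par x) * t + lam x.
Proof.
  assert (out : forall z, (lev z > lev x)%nat -> z <> par x -> test_fn z = 0).
  { intros z L E. apply test_fn_out; auto.
    intros D. apply (descendant_lev_le par lev Hlev) in D. lia. }
  unfold JacR. rewrite test_fn_par, out.
  2:{ rewrite !Hlev. lia. }
  2:{ apply par_neq with (lev := lev). exact Hlev. }
  rewrite (lsumR_same_support _ [x]); auto using NoDup_cons, NoDup_nil.
  - rewrite lsumR_cons, lsumR_nil, test_fn_root. ring.
  - intros y Hy. split; intros H.
    + apply Hch in H. left. symmetry.
      assert (lev y = lev x) as L by (apply Nat.succ_inj; rewrite <- !Hlev; congruence).
      destruct (excluded_middle_informative (descendant par y x)) as [D|D].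
      * apply (descendant_lev_eq par lev Hlev); auto.
      * exfalso. apply Hy. rewrite test_fn_out; [ring|exact D|].
        intros E. rewrite E, Hlev in L. lia.
    + destruct H as [<-|[]]. now apply Hch.
Qed.

End TestFunction.

Lemma form_test_fn x t : (forall z, descendant par z x -> z <> x -> pivot z <> 0) ->
  exists S, NoDup S /\ (forall z, ~ In z S -> test_fn x t z = 0) /\
    form par ch lam beta S (test_fn x t) (test_fn x t)
    = pivot x + 2 * lam x * t + beta (par x) * (t * t).
Proof.
  intros Hd.
  set (S := nodup (fun a b => excluded_middle_informative (a = b))
                  (par x :: descendants ch (lev x) x)).
  assert (inS : forall z, descendant par z x \/ z = par x -> In z S).
  { intros z Hz. apply nodup_In. destruct Hz as [D|<-]; [right|now left].
    now apply (in_descendants par lev Hlev ch Hch). }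
  assert (support : forall z, test_fn x t z <> 0 -> descendant par z x \/ z = par x).
  { intros z Hz. destruct (excluded_middle_informative (descendant par z x)) as [D|D]; auto.
    destruct (excluded_middle_informative (z = par x)) as [E|E]; auto.
    now rewrite test_fn_out in Hz. }
  assert (Hx : x <> par x) by (apply not_eq_sym, (par_neq par lev Hlev)).
  exists S. split; [apply NoDup_nodup|split].
  { intros z Hz. destruct (Req_dec_T (test_fn x t z) 0) as [E|E]; auto.
    now destruct (Hz (inS z (support z E))). }
  unfold form. rewrite (lsumR_same_support S [x; par x]).
  - rewrite !lsumR_cons, lsumR_nil, JacR_test_fn_root, JacR_test_fn_par,
      test_fn_root, test_fn_par. ring.
  - apply NoDup_nodup.
  - constructor; [intros [E|[]]; auto|]. constructor; [intros []|constructor].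
  - intros z Hz.
    assert (z = x \/ z = par x) as Hzx.
    { destruct (support z) as [D|E]; auto.
      - intros E; apply Hz; rewrite E; ring.
      - destruct (excluded_middle_informative (z = x)) as [E|E]; auto.
        exfalso; apply Hz. rewrite JacR_test_fn_below; auto. ring. }
    split; intros _; [destruct Hzx as [->| ->]; cbn; auto|].
    apply inS. destruct Hzx as [->| ->]; [left; apply descendant_refl|now right].
Qed.

Hypothesis Hlam : forall x, 0 < lam x.

Lemma pivot_pos : J_nonneg par ch lam beta -> forall x, 0 < pivot x.
Proof.
  intros HJ.
  enough (forall k x, (lev x < k)%nat -> 0 < pivot x) by eauto.
  induction k as [|k IH]; intros x Hx; [lia|].
  apply (quadratic_nonneg_const_pos (beta (par x)) (lam x)); [apply Rgt_not_eq, Hlam|].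
  intros t. destruct (form_test_fn x t) as [S [NS [HS <-]]].
  - intros z D Hz. apply Rgt_not_eq, IH.
    pose proof (descendant_lev_le par lev Hlev z x D).
    assert (lev z <> lev x) by (intros E; apply Hz, (descendant_lev_eq par lev Hlev); auto).
    lia.
  - now apply form_nonneg_of_J_nonneg.
Qed.

End Pivots.

Theorem theorem7 (V : Type) (par : V -> V) (lev : V -> nat) (ch : V -> list V)
  (lam beta : V -> R)
  (Htree : level_tree par lev ch)
  (Hlam : forall x, 0 < lam x) :
  ((exists m : V -> R, (forall x, 0 < m x) /\
      (forall x, beta x * m x >= lam x * m (par x) + lsumR (ch x) (fun y => lam y * m y))) ->
   J_nonneg par ch lam beta) /\
  (J_nonneg par ch lam beta ->
   exists m : V -> R, (forall x, 0 < m x) /\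
      (forall x, beta x * m x = lam x * m (par x) + lsumR (ch x) (fun y => lam y * m y))).
Proof.
  destruct Htree as [[o] [Hlev [HND [Hch [_ [Hleaf Hconn]]]]]].
  split.
  - intros [m [Hm Hsup]]. exact (J_nonneg_of_superharmonic par ch lam beta Hch HND m Hlam Hm Hsup).
  - intros HJ.
    pose proof (pivot_pos par lev ch lam beta Hlev Hch HND Hleaf Hlam HJ) as Hd.
    destruct (multiplicative_potential par lev Hlev (ratio lev ch lam beta) o) as [m [Hm Hrec]];
      auto.
    { intros x. apply Rdiv_lt_0_compat; auto. }
    exists m. split; auto.
    apply (harmonic_of_ratio_potential par lev ch lam beta Hlev Hch Hleaf); auto.
    intros x. apply Rgt_not_eq, Hd.
Qed.
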